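(* Let $(\Omega,\Sigma,\mathbb{P}_0)$ be a probability space, $\mathbb{L}^2=\mathbb{L}^2(\Omega,\Sigma,\mathbb{P}_0)$, and $n\ge 1$ an integer. The functional $\mathrm{MAXVAR}_n:\mathbb{L}^2\to\mathbb{R}$, $\mathrm{MAXVAR}_n(X)=\mathbb{E}(\max\{X_1,\dots,X_n\})$ where $X_1,\dots,X_n$ are i.i.d. copies of $X$, is a coherent risk measure in the basic sense, i.e. it satisfies: (A1) $\mathrm{MAXVAR}_n(C)=C$ for every constant $C$; (A2) $\mathrm{MAXVAR}_n(\lambda X+(1-\lambda)Y)\le \lambda\,\mathrm{MAXVAR}_n(X)+(1-\lambda)\,\mathrm{MAXVAR}_n(Y)$ for all $X,Y\in\mathbb{L}^2$ and $\lambda\in[0,1]$; (A3) $\mathrm{MAXVAR}_n(X)\le\mathrm{MAXVAR}_n(Y)$ whenever $X,Y\in\mathbb{L}^2$ and $X\le Y$; (A4) if $\|X^k-X\|_2\to0$ and $\mathrm{MAXVAR}_n(X^k)\le 0$ for all $k\in\mathbb{N}$, then $\mathrm{MAXVAR}_n(X)\le0$; (A5) $\mathrm{MAXVAR}_n(\lambda X)=\lambda\,\mathrm{MAXVAR}_n(X)$ for all $\lambda>0$ and $X\in\mathbb{L}^2$.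
   Context: $\mathbb{L}^2$ is the space of square-integrable random variables on $(\Omega,\Sigma,\mathbb{P}_0)$ with norm $\|\cdot\|_2$. ''i.i.d. copies of $X$'' means independent random variables each having the same distribution as $X$; the value $\mathbb{E}(\max\{X_1,\dots,X_n\})$ depends only on the distribution of $X$, so $\mathrm{MAXVAR}_n$ is well defined (and finite on $\mathbb{L}^2$). *)

From HB Require Import structures.
From mathcomp Require Import all_boot all_order all_algebra.
From mathcomp Require Import all_classical all_reals all_analysis.
Set Implicit Arguments. Unset Strict Implicit. Unset Printing Implicit Defensive.
Import Order.TTheory GRing.Theory Num.Theory.
Import numFieldNormedType.Exports.
Local Open Scope classical_set_scope.
Local Open Scope ring_scope.

Section MaxVar.
Context d (T : measurableType d) (R : realType) (P : probability T R).

Definition L2 (X : T -> R) : Prop :=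
  measurable_fun setT X /\ finite_norm P 2%:E X.

Definition Exp (X : T -> R) : R := \int[P]_(w in setT) X w.

(* maxtail X k m = E[ max(m, X_1, ..., X_k) ] where X_1..X_k are i.i.d.
   copies of X realised as the coordinates of the product space
   (Omega^k, P^{(x)k}); the expectation over the product is written as the
   iterated integral (one integral per independent coordinate). *)
Fixpoint maxtail (X : T -> R) (k : nat) (m : R) : R :=
  match k with
  | 0%N => m
  | k'.+1 => Exp (fun w => maxtail X k' (Num.max m (X w)))
  end.

Definition MAXVAR (n : nat) (X : T -> R) : R :=
  Exp (fun w => maxtail X n.-1 (X w)).

End MaxVar.

From HB Require Import structures.
From mathcomp Require Import all_boot all_order all_algebra.
From mathcomp Require Import all_classical all_reals all_analysis.
From mathcomp Require Import measurable_realfun lra.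
Import Order.TTheory GRing.Theory Num.Theory.
Import numFieldNormedType.Exports.

Set Implicit Arguments.
Unset Strict Implicit.
Unset Printing Implicit Defensive.
Local Open Scope classical_set_scope.
Local Open Scope ring_scope.

(* Write M_k(X, m) = E[max(m, X_1, ..., X_k)] ([maxtail]), so that
   M_(k+1)(X, m) = E[M_k(X, max(m, X))] and MAXVAR_n(X) = E[M_(n-1)(X, X)].
   The map m |-> max(m, x) is monotone, convex, positively homogeneous and
   1-Lipschitz; by induction on k these properties pass to (X, m) |-> M_k(X, m),
   which is moreover k-Lipschitz in X for the L^1 norm.  Hence MAXVAR_n is
   n-Lipschitz for the L^1 norm, a fortiori for the L^2 norm on a probability
   space, and closedness (A4) follows. *)

Definition nonexpansive (R : numDomainType) (g : R -> R) :=
  forall a b, `|g a - g b| <= `|a - b|.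

Lemma nonexpansive_continuous (R : realFieldType) (g : R -> R) :
  nonexpansive g -> continuous g.
Proof.
move=> gK x; apply/cvgrPdist_lt => e e0.
by near=> y; rewrite (le_lt_trans (gK _ _)).
Unshelve. all: by end_near.
Qed.

Lemma max_dist (R : realDomainType) (m m' x y : R) :
  `|Num.max m x - Num.max m' y| <= `|m - m'| + `|x - y|.
Proof.
have := ler_norm (m - m'); have := ler_norm (x - y).
have := ler_norm (m' - m); have := ler_norm (y - x).
rewrite !(distrC m') !(distrC y) ler_norml.
by case: (ltP m x); case: (ltP m' y) => *; apply/andP; split; lra.
Qed.

Lemma nonexpansive_max (R : realDomainType) (m : R) : nonexpansive (Num.max m).
Proof. by move=> a b; have := max_dist m m a b; rewrite subrr normr0 add0r. Qed.

Lemma nonexpansive_comp (R : numDomainType) (g h : R -> R) :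
  nonexpansive g -> nonexpansive h -> nonexpansive (g \o h).
Proof. by move=> gK hK a b; exact: le_trans (gK _ _) (hK _ _). Qed.

Lemma max_convex (R : realDomainType) (l a b x y : R) : 0 <= l <= 1 ->
  Num.max (l * a + (1 - l) * b) (l * x + (1 - l) * y)
    <= l * Num.max a x + (1 - l) * Num.max b y.
Proof.
case/andP=> l0 l1; have l0' : 0 <= 1 - l by rewrite subr_ge0.
by rewrite ge_max; apply/andP; split; apply: lerD; apply: ler_wpM2l;
  rewrite // le_max lexx ?orbT.
Qed.

Section Expectation.
Context (R : realType) (d : measure_display) (T : measurableType d)
  (P : probability T R).
Implicit Types (f g h X : T -> R).

Local Notation integrableR f := (P.-integrable setT (EFin \o f)).

Lemma measurable_integrableR f : integrableR f -> measurable_fun setT f.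
Proof. by case/integrableP => /measurable_EFinP. Qed.

Lemma integrableR_cst c : integrableR (fun _ => c).
Proof. exact: finite_measure_integrable_cst. Qed.

Lemma integrableRD f g : integrableR f -> integrableR g ->
  integrableR (fun w => f w + g w).
Proof. by move=> fi gi; exact: (integrableD measurableT fi gi). Qed.

Lemma integrableRZl c f : integrableR f -> integrableR (fun w => c * f w).
Proof. by move=> fi; exact: (integrableZl measurableT c fi). Qed.

Lemma integrableRB f g : integrableR f -> integrableR g ->
  integrableR (fun w => f w - g w).
Proof. by move=> fi gi; exact: (integrableB measurableT fi gi). Qed.

Lemma integrableR_norm f : integrableR f -> integrableR (fun w => `|f w|).
Proof. exact: integrable_norm. Qed.

Lemma integrableR_nonexpansive_comp (g : R -> R) f :
  nonexpansive g -> integrableR f -> integrableR (g \o f).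
Proof.
move=> gK fi.
apply: (le_integrable measurableT (g := EFin \o fun w => `|g 0| + `|f w|)).
- apply/measurable_EFinP/measurableT_comp; last exact: measurable_integrableR.
  by apply: continuous_measurable_fun; exact: nonexpansive_continuous.
- move=> w _ /=; rewrite lee_fin [leRHS]ger0_norm ?addr_ge0//.
  rewrite -[g (f w)](subrK (g 0)) (le_trans (ler_normD _ _))// addrC lerD2l.
  by have := gK (f w) 0; rewrite subr0.
- exact: integrableRD (integrableR_cst _) (integrableR_norm fi).
Qed.

Lemma Exp_cst c : Exp P (fun _ => c) = c.
Proof. by rewrite /Exp Rintegral_cst// [X in fine X]probability_setT mulr1. Qed.

Lemma ExpD f g : integrableR f -> integrableR g ->
  Exp P (fun w => f w + g w) = Exp P f + Exp P g.
Proof. exact: RintegralD. Qed.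

Lemma ExpZl c f : integrableR f -> Exp P (fun w => c * f w) = c * Exp P f.
Proof. exact: RintegralZl. Qed.

Lemma ler_Exp f g : integrableR f -> integrableR g ->
  (forall w, f w <= g w) -> Exp P f <= Exp P g.
Proof. by move=> fi gi fg; apply: le_Rintegral. Qed.

Lemma ler_Exp_ae f g : integrableR f -> integrableR g ->
  {ae P, forall w, f w <= g w} -> Exp P f <= Exp P g.
Proof.
move=> fi gi fg.
have mf := measurable_integrableR fi; have mg := measurable_integrableR gi.
have fgi : integrableR (fun w => Num.max (f w) (g w)).
  apply: (le_integrable measurableT (g := EFin \o fun w => `|f w| + `|g w|)).
  - exact/measurable_EFinP/measurable_maxr.
  - move=> w _ /=; rewrite lee_fin [leRHS]ger0_norm ?addr_ge0//.
    by case: (leP (f w) (g w)); rewrite ?lerDl ?lerDr.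
  - exact: integrableRD (integrableR_norm fi) (integrableR_norm gi).
have -> : Exp P g = Exp P (fun w => Num.max (f w) (g w)).
  rewrite /Exp /Rintegral; congr fine; apply: ae_eq_integral => //.
  - exact/measurable_EFinP.
  - exact/measurable_EFinP/measurable_maxr.
  by apply: filterS fg => w fgw _ /=; rewrite (max_idPr fgw).
by apply: ler_Exp => // w; rewrite le_max lexx ?orbT.
Qed.

Lemma Exp_dist_le f g h : integrableR f -> integrableR g -> integrableR h ->
  (forall w, `|f w - g w| <= h w) -> `|Exp P f - Exp P g| <= Exp P h.
Proof.
move=> fi gi hi fgh; rewrite /Exp -RintegralB//.
apply: le_trans (le_normr_Rintegral _ _) _ => //; first exact: integrableRB.
exact: ler_Exp (integrableR_norm (integrableRB fi gi)) hi fgh.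
Qed.

Lemma integrableR_L2 X : L2 P X -> integrableR X.
Proof.
case=> mX X2.
apply/Lfun1_integrable/(Lfun_subset12 (fin_num_measure P _ _)) => //.
by rewrite inE; apply/andP; split; rewrite inE.
Qed.

Lemma Exp_norm_le_Lnorm2 X : integrableR X ->
  ((Exp P (fun w => `|X w|))%:E <= Lnorm P 2%:E (fun w => (X w)%:E))%E.
Proof.
move=> Xi; have half : 2^-1 + 2^-1 = 1 :> R by rewrite -div1r -splitr.
have := hoelder P (measurable_integrableR Xi) (measurable_cst (1 : R))
  (ltr0Sn _ 1) (ltr0Sn _ 1) half.
rewrite Lnorm_cst1 [X in (X `^ _)%E]probability_setT poweR1r mule1.
apply: le_trans; rewrite Lnorm1 /Exp /Rintegral fineK.
  by under [leRHS]eq_integral => x _ do rewrite /= mulr1.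
exact: integrable_fin_num (integrableR_norm Xi).
Qed.

End Expectation.

Section MaxVar.
Context (R : realType) (d : measure_display) (T : measurableType d)
  (P : probability T R).
Implicit Types (X Y : T -> R) (k n : nat).

Local Notation integrableR f := (P.-integrable setT (EFin \o f)).

Lemma maxtail_nonexpansive k X : integrableR X -> nonexpansive (maxtail P X k).
Proof.
move=> Xi; elim: k => [|k IH] a b //=.
have maxtailXi c : integrableR (fun w => maxtail P X k (Num.max c (X w))).
  have gK := nonexpansive_comp IH (nonexpansive_max c).
  exact: integrableR_nonexpansive_comp gK Xi.
rewrite -[leRHS](Exp_cst P); apply: Exp_dist_le => // [|w].
  exact: integrableR_cst.
apply: le_trans (IH _ _) _.
by have := max_dist a b (X w) (X w); rewrite subrr normr0 addr0.
Qed.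

Lemma integrableR_maxtail_max k X m : integrableR X ->
  integrableR (fun w => maxtail P X k (Num.max m (X w))).
Proof.
move=> Xi.
have gK := nonexpansive_comp (maxtail_nonexpansive k Xi) (nonexpansive_max m).
exact: integrableR_nonexpansive_comp gK Xi.
Qed.

Lemma integrableR_maxtail k X : integrableR X ->
  integrableR (fun w => maxtail P X k (X w)).
Proof.
move=> Xi; exact: integrableR_nonexpansive_comp (maxtail_nonexpansive k Xi) Xi.
Qed.

Lemma maxtail_lipschitz k X Y m m' : integrableR X -> integrableR Y ->
  `|maxtail P X k m - maxtail P Y k m'|
    <= `|m - m'| + k%:R * Exp P (fun w => `|X w - Y w|).
Proof.
move=> Xi Yi; elim: k m m' => [|k IH] m m' /=; first by rewrite mul0r addr0.
set c := Exp P (fun w => `|X w - Y w|).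
have XYi := integrableR_norm (integrableRB Xi Yi).
have hi : integrableR (fun w => `|m - m'| + `|X w - Y w| + k%:R * c).
  by apply: integrableRD; [apply: integrableRD => //|]; exact: integrableR_cst.
apply: le_trans (Exp_dist_le _ _ hi _) _; try exact: integrableR_maxtail_max.
  by move=> w; apply: le_trans (IH _ _) _; rewrite lerD2r max_dist.
rewrite !ExpD ?Exp_cst //; try exact: integrableR_cst.
  by rewrite -/c -natr1 mulrDl mul1r; lra.
by apply: integrableRD => //; exact: integrableR_cst.
Qed.

Lemma le_maxtail k X Y m m' : integrableR X -> integrableR Y ->
  {ae P, forall w, X w <= Y w} -> m <= m' ->
  maxtail P X k m <= maxtail P Y k m'.
Proof.
move=> Xi Yi XY; elim: k m m' => [|k IH] m m' mm' //=.
apply: ler_Exp_ae; try exact: integrableR_maxtail_max.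
by apply: filterS XY => w XYw; apply: IH; rewrite ge_max !le_max mm' XYw orbT.
Qed.

Lemma maxtail_convex k X Y l m m' :
  integrableR X -> integrableR Y -> 0 <= l <= 1 ->
  maxtail P (fun w => l * X w + (1 - l) * Y w) k (l * m + (1 - l) * m')
    <= l * maxtail P X k m + (1 - l) * maxtail P Y k m'.
Proof.
move=> Xi Yi l01; elim: k m m' => [|k IH] m m' //=.
set Z := fun w => l * X w + (1 - l) * Y w.
have Zi : integrableR Z by apply: integrableRD; exact: integrableRZl.
have maxZi : integrableR (fun w =>
    maxtail P Z k (l * Num.max m (X w) + (1 - l) * Num.max m' (Y w))).
  apply: integrableR_nonexpansive_comp (maxtail_nonexpansive k Zi) _.
  by apply: integrableRD; apply: integrableRZl;
    apply: integrableR_nonexpansive_comp (nonexpansive_max _) _.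
rewrite -!ExpZl ?integrableR_maxtail_max// -ExpD;
  try by apply: integrableRZl; exact: integrableR_maxtail_max.
apply: (le_trans (ler_Exp _ maxZi _)); first exact: integrableR_maxtail_max.
  by move=> w; apply: le_maxtail => //; [exact: aeW | exact: max_convex].
apply: ler_Exp maxZi _ (fun w => IH _ _).
by apply: integrableRD; apply: integrableRZl; exact: integrableR_maxtail_max.
Qed.

Lemma maxtail_pmul k X l m : 0 <= l -> integrableR X ->
  maxtail P (fun w => l * X w) k (l * m) = l * maxtail P X k m.
Proof.
move=> l0 Xi; elim: k m => [|k IH] m //=.
rewrite -ExpZl; last exact: integrableR_maxtail_max.
by congr (Exp P _); apply/funext => w; rewrite -maxr_pMr// IH.
Qed.

Lemma maxtail_cst k C m : C <= m -> maxtail P (fun _ => C) k m = m.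
Proof.
by move=> Cm; elim: k => [|k IH] //=; rewrite (max_idPl Cm) IH Exp_cst.
Qed.

Lemma MAXVAR_cst n C : MAXVAR P n (fun _ => C) = C.
Proof. by rewrite /MAXVAR maxtail_cst// Exp_cst. Qed.

Lemma le_MAXVAR n X Y : integrableR X -> integrableR Y ->
  {ae P, forall w, X w <= Y w} -> MAXVAR P n X <= MAXVAR P n Y.
Proof.
move=> Xi Yi XY; apply: ler_Exp_ae; try exact: integrableR_maxtail.
by apply: filterS (XY) => w XYw; exact: le_maxtail.
Qed.

Lemma MAXVAR_convex n X Y l : integrableR X -> integrableR Y -> 0 <= l <= 1 ->
  MAXVAR P n (fun w => l * X w + (1 - l) * Y w)
    <= l * MAXVAR P n X + (1 - l) * MAXVAR P n Y.
Proof.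
move=> Xi Yi l01; rewrite /MAXVAR -!ExpZl ?integrableR_maxtail// -ExpD;
  try by apply: integrableRZl; exact: integrableR_maxtail.
apply: ler_Exp => [||w]; last exact: maxtail_convex.
  by apply: integrableR_maxtail; apply: integrableRD; exact: integrableRZl.
by apply: integrableRD; apply: integrableRZl; exact: integrableR_maxtail.
Qed.

Lemma MAXVAR_pmul n X l : 0 <= l -> integrableR X ->
  MAXVAR P n (fun w => l * X w) = l * MAXVAR P n X.
Proof.
move=> l0 Xi; rewrite /MAXVAR -ExpZl ?integrableR_maxtail//.
by congr (Exp P _); apply/funext => w; rewrite maxtail_pmul.
Qed.

Lemma MAXVAR_lipschitz n X Y : (0 < n)%N -> integrableR X -> integrableR Y ->
  `|MAXVAR P n X - MAXVAR P n Y| <= n%:R * Exp P (fun w => `|X w - Y w|).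
Proof.
case: n => // n _ Xi Yi; set c := Exp P (fun w => `|X w - Y w|).
have XYi := integrableR_norm (integrableRB Xi Yi).
have hi : integrableR (fun w => `|X w - Y w| + n%:R * c).
  by apply: integrableRD => //; exact: integrableR_cst.
apply: le_trans (Exp_dist_le _ _ hi _) _; try exact: integrableR_maxtail.
  by move=> w; exact: maxtail_lipschitz.
rewrite ExpD ?Exp_cst //; last exact: integrableR_cst.
by rewrite -/c -natr1 mulrDl mul1r addrC.
Qed.

Lemma MAXVAR_le_Lnorm2 n X Y : (0 < n)%N -> L2 P X -> L2 P Y ->
  ((MAXVAR P n X)%:E <= (MAXVAR P n Y)%:E
     + n%:R%:E * Lnorm P 2%:E (fun w => (Y w - X w)%:E))%E.
Proof.
move=> n0 /integrableR_L2 Xi /integrableR_L2 Yi.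
apply: (@le_trans _ _ ((MAXVAR P n Y)%:E
    + n%:R%:E * (Exp P (fun w => `|Y w - X w|))%:E)%E).
  rewrite -EFinM -EFinD lee_fin -lerBlDl.
  by apply: le_trans (ler_norm _) _; rewrite distrC MAXVAR_lipschitz.
by rewrite leeD2l// lee_wpmul2l// Exp_norm_le_Lnorm2// integrableRB.
Qed.

End MaxVar.

Theorem theorem1 (R : realType) (d : measure_display) (T : measurableType d)
  (P : probability T R) (n : nat) (hn : (1 <= n)%N) :
  (* (A1) *)
  (forall C : R, MAXVAR P n (fun _ => C) = C) /\
  (* (A2) *)
  (forall (X Y : T -> R) (l : R), L2 P X -> L2 P Y -> 0 <= l <= 1 ->
     MAXVAR P n (fun w => l * X w + (1 - l) * Y w)
       <= l * MAXVAR P n X + (1 - l) * MAXVAR P n Y) /\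
  (* (A3) *)
  (forall X Y : T -> R, L2 P X -> L2 P Y ->
     {ae P, forall w, X w <= Y w} -> MAXVAR P n X <= MAXVAR P n Y) /\
  (* (A4) *)
  (forall (Xk : nat -> T -> R) (X : T -> R),
     (forall k, L2 P (Xk k)) -> L2 P X ->
     (fun k => Lnorm P 2%:E (fun w => (Xk k w - X w)%:E)) @ \oo --> 0%E ->
     (forall k, MAXVAR P n (Xk k) <= 0) -> MAXVAR P n X <= 0) /\
  (* (A5) *)
  (forall (X : T -> R) (l : R), 0 < l -> L2 P X ->
     MAXVAR P n (fun w => l * X w) = l * MAXVAR P n X).
Proof.
split; first exact: MAXVAR_cst.
split.
  by move=> X Y l /integrableR_L2 Xi /integrableR_L2 Yi; exact: MAXVAR_convex.
split.
  by move=> X Y /integrableR_L2 Xi /integrableR_L2 Yi; exact: le_MAXVAR.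
split; last by move=> X l /ltW l0 /integrableR_L2 Xi; exact: MAXVAR_pmul.
move=> Xk X Xk2 X2 XkX Xk0; rewrite -lee_fin.
have MX_le k : ((MAXVAR P n X)%:E
    <= n%:R%:E * Lnorm P 2%:E (fun w => (Xk k w - X w)%:E))%E.
  apply: le_trans (MAXVAR_le_Lnorm2 hn X2 (Xk2 k)) _.
  by rewrite -[leRHS]add0e leeD2r// lee_fin.
have := cvgeZl (y := n%:R%:E) isT XkX; rewrite mule0 => /cvge_to_ge; apply.
exact: nearW.
Qed.
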